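(* Let $(X,Y)$ be a pair of uncorrelated real random variables. If $X\in\mathcal{G}(\nu)$ and $|Y|\le\kappa$ almost surely for some $\nu>0$ and $\kappa>0$, then $XY\in\mathcal{G}((9/2)\kappa^2\nu)$.
   Context: A centered random variable $Y$ is sub-Gaussian with variance factor $\tau^2$, written $Y\in\mathcal{G}(\tau^2)$, if $\log\mathbb{E}[\exp(\lambda Y)]\le\lambda^2\tau^2/2$ for all $\lambda\in\mathbb{R}$ (in particular membership in $\mathcal{G}(\cdot)$ requires the variable to be centered). *)

From HB Require Import structures.
From mathcomp Require Import all_boot all_order all_algebra.
From mathcomp Require Import all_classical all_reals all_analysis.
Set Implicit Arguments. Unset Strict Implicit. Unset Printing Implicit Defensive.
Import Order.TTheory GRing.Theory Num.Theory.
Local Open Scope ring_scope.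

Definition centered {d} {T : measurableType d} {R : realType}
  (P : probability T R) (Y : T -> R) : Prop :=
  measurable_fun setT Y /\ Y \in Lfun P 1 /\ ('E_P[Y] = 0)%E.

(* Y \in G(tau2): Y centered and log E[exp(lambda Y)] <= lambda^2 tau2 / 2
   for every real lambda, written (equivalently, as log is increasing and
   allowing E[...] = +oo) as E[exp(lambda Y)] <= exp(lambda^2 tau2 / 2)
   in the extended reals. *)
Definition sub_gaussian {d} {T : measurableType d} {R : realType}
  (P : probability T R) (tau2 : R) (Y : T -> R) : Prop :=
  centered P Y /\
  forall lambda : R,
    ('E_P[fun w => expR (lambda * Y w)] <= (expR (lambda ^+ 2 * tau2 / 2))%:E)%E.

Definition uncorrelated {d} {T : measurableType d} {R : realType}
  (P : probability T R) (X Y : T -> R) : Prop :=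
  X \in Lfun P 1 /\ Y \in Lfun P 1 /\ (X * Y)%R \in Lfun P 1 /\
  covariance P X Y = 0%E.

(* Since e^z - z <= cosh (2 z) and XY is centered, E[e^(l XY)] <= E[cosh (2 l XY)].
   As cosh is even and increasing on [0, +oo), |Y| <= kappa bounds this by
   E[cosh (2 kappa l X)], the mean of the moment generating function of X at
   2 kappa l and -2 kappa l, hence by exp (2 kappa^2 l^2 nu), and
   2 <= 9/4 = (9/2) / 2. *)

From HB Require Import structures.
From mathcomp Require Import all_boot all_order all_algebra.
From mathcomp Require Import all_classical all_reals all_analysis.
From mathcomp Require Import lra measurable_realfun.
Set Implicit Arguments. Unset Strict Implicit. Unset Printing Implicit Defensive.
Import Order.TTheory GRing.Theory Num.Theory.
Local Open Scope ring_scope.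

Definition cosh {R : realType} (x : R) : R := (expR x + expR (- x)) / 2.

Section cosh.
Context {R : realType}.
Implicit Types a b x z : R.

Lemma coshN x : cosh (- x) = cosh x.
Proof. by rewrite /cosh opprK addrC. Qed.

Lemma cosh_norm x : cosh `|x| = cosh x.
Proof. by case: (ler0P x) => x0; rewrite ?coshN. Qed.

Lemma cosh_ge0 x : 0 <= cosh x.
Proof. by rewrite /cosh divr_ge0 // addr_ge0 // ltW // expR_gt0. Qed.

Lemma ler_cosh_ge0 a b : 0 <= a -> a <= b -> cosh a <= cosh b.
Proof.
move=> a0 ab; rewrite /cosh ler_pM2r //.
(* e^b + e^-b - e^a - e^-a = (e^b - e^a) (1 - e^-(a+b)) *)
rewrite (_ : - a = b + - (a + b)); last by rewrite opprD addrCA subrr addr0.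
rewrite (_ : - b = a + - (a + b)); last by rewrite opprD addrA subrr add0r.
rewrite !expRD.
have : expR a <= expR b by rewrite ler_expR.
have : expR (- (a + b)) <= 1 by rewrite expR_le1 oppr_le0 addr_ge0 // (le_trans a0).
have := expR_gt0 (- (a + b)); have := expR_gt0 a.
nra.
Qed.

Lemma ler_cosh_norm a b : `|a| <= `|b| -> cosh a <= cosh b.
Proof. by move=> ab; rewrite -cosh_norm -(cosh_norm b) ler_cosh_ge0. Qed.

(* Write y = e^z and t = e^-z: from -z <= t - 1 the claim reduces to
   (y - 1)^2 + (t - 1)^2 >= 0. *)
Lemma expR_subr_le_cosh2 z : expR z - z <= cosh (2 * z).
Proof.
have := expR_ge1Dx (- z).
rewrite /cosh -mulrN !(expRM_natl 2).
have := sqr_ge0 (expR z - 1); have := sqr_ge0 (expR (- z) - 1).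
rewrite !expr2; nra.
Qed.

Lemma measurable_cosh : measurable_fun setT (@cosh R).
Proof.
apply: measurable_funM => //; apply: measurable_funD; first exact: measurable_expR.
by apply: measurableT_comp; [exact: measurable_expR | exact: oppr_measurable].
Qed.

End cosh.

Section expectation_cosh.
Local Open Scope ereal_scope.
Context d (T : measurableType d) (R : realType) (P : probability T R).

Lemma Lfun1_ge0_expectation_lty (f : T -> R) :
  measurable_fun setT f -> (forall x, 0 <= f x)%R ->
  'E_P[f] < +oo -> f \in Lfun P 1.
Proof.
move=> mf f0 Ef; apply/Lfun1_integrable/integrableP; split.
  exact/measurable_EFinP.
under eq_integral => x _ do rewrite /= ger0_norm //.
by move: Ef; rewrite unlock.
Qed.

Lemma le_expectation_cosh (f g : T -> R) :
  measurable_fun setT f -> measurable_fun setT g ->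
  {ae P, forall w, `|f w| <= `|g w|}%R ->
  'E_P[fun w => cosh (f w)] <= 'E_P[fun w => cosh (g w)].
Proof.
move=> mf mg fg; apply: expectation_le.
- exact: measurableT_comp measurable_cosh mf.
- exact: measurableT_comp measurable_cosh mg.
- by move=> w; exact: cosh_ge0.
- by move=> w; exact: cosh_ge0.
by apply: filterS fg => w; exact: ler_cosh_norm.
Qed.

(* The centering kills the linear term in [expR z <= cosh (2 z) + z]. *)
Lemma centered_expectation_expR_le (Z : T -> R) (l : R) : centered P Z ->
  'E_P[fun w => expR (l * Z w)] <= 'E_P[fun w => cosh (2 * l * Z w)].
Proof.
move=> [mZ [Z1 EZ0]].
have mlZ : measurable_fun setT (fun w => l * Z w)%R by exact: measurable_funM.
have mC : measurable_fun setT (fun w => cosh (2 * l * Z w)).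
  by apply: measurableT_comp measurable_cosh _; exact: measurable_funM.
have [->|Cfin] := eqVneq 'E_P[fun w => cosh (2 * l * Z w)] +oo.
  by rewrite leey.
have C1 : (fun w => cosh (2 * l * Z w)) \in Lfun P 1.
  apply: Lfun1_ge0_expectation_lty => //; first by move=> w; exact: cosh_ge0.
  by rewrite ltey.
have lZ1 : (l \o* Z)%R \in Lfun P 1 by exact: Lfun_scale.
have -> : 'E_P[fun w => cosh (2 * l * Z w)] =
          'E_P[(fun w => cosh (2 * l * Z w)) \+ l \o* Z].
  by rewrite expectationD // expectationZl // EZ0 mule0 adde0.
apply: expectation_le => //.
- by apply: measurableT_comp mlZ; exact: measurable_expR.
- by apply: measurable_funD => //; exact: measurable_funM.
- move=> w /=; have := expR_subr_le_cosh2 (l * Z w)%R.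
  by rewrite mulrA; have := expR_gt0 (l * Z w)%R; lra.
apply: aeW => w /=; have := expR_subr_le_cosh2 (l * Z w)%R.
by rewrite mulrA; lra.
Qed.

Lemma sub_gaussian_expectation_cosh (X : T -> R) (nu c : R) :
  sub_gaussian P nu X ->
  'E_P[fun w => cosh (c * X w)] <= (expR (c ^+ 2 * nu / 2))%:E.
Proof.
move=> [[mX _] mgf].
pose E k := fun w => expR (k * X w).
have E1 k : E k \in Lfun P 1.
  apply: Lfun1_ge0_expectation_lty.
  - by apply: measurableT_comp; [exact: measurable_expR | exact: measurable_funM].
  - by move=> w; exact: ltW (expR_gt0 _).
  - exact: le_lt_trans (mgf k) (ltry _).
have -> : (fun w => cosh (c * X w)) = (2^-1 \o* (E c \+ E (- c)%R))%R.
  by apply/funext => w; rewrite /cosh /E /= mulNr mulrC.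
rewrite expectationZl ?rpredD // expectationD //.
have := mgf c; have := mgf (- c)%R; rewrite sqrrN.
rewrite -(fineK (expectation_fin_num (E1 c))) -(fineK (expectation_fin_num (E1 (- c)%R))).
by rewrite -EFinD -EFinM !lee_fin; lra.
Qed.

Lemma uncorrelated_centered_expectationM (X Y : T -> R) :
  uncorrelated P X Y -> 'E_P[X] = 0 -> 'E_P[X * Y]%R = 0.
Proof.
move=> [X1 [Y1 [XY1 cov0]]] EX0.
by move: cov0; rewrite covarianceE // EX0 mul0e sube0.
Qed.

End expectation_cosh.

Theorem lemma4 (d : measure_display) (T : measurableType d) (R : realType)
  (P : probability T R) (X Y : {RV P >-> R}) (nu kappa : R) :
  0 < nu -> 0 < kappa ->
  uncorrelated P X Y ->
  sub_gaussian P nu X ->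
  {ae P, forall w, `|Y w| <= kappa} ->
  sub_gaussian P (9 / 2 * kappa ^+ 2 * nu) (fun w => X w * Y w).
Proof.
move=> nu0 k0 XY sgX Yk.
have [[mX [_ EX0]] _] := sgX.
have [_ [_ [XY1 _]]] := XY.
have mXY : measurable_fun setT (fun w => X w * Y w) by exact: measurable_funM.
have cXY : centered P (fun w => X w * Y w).
  by split; [|split; [|exact: uncorrelated_centered_expectationM]].
split => // l.
apply: le_trans (centered_expectation_expR_le l cXY) _.
apply: (le_trans (y := 'E_P[fun w => cosh (2 * kappa * l * X w)]%E)).
  apply: le_expectation_cosh; [exact: measurable_funM.. |].
  apply: filterS Yk => w Yw.
  rewrite [2 * kappa * l]mulrAC [_ * kappa * X w]mulrAC mulrA.
  by rewrite [X in _ <= X]normrM (gtr0_norm k0) normrM ler_wpM2l.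
apply: le_trans (sub_gaussian_expectation_cosh _ sgX) _.
rewrite lee_fin ler_expR.
have := sqr_ge0 (kappa * l); rewrite !expr2; nra.
Qed.
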